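(* Let $\{m_k:k\ge0\}$ be any sequence of positive reals with $\sum_k m_k=\infty$ and $m_k\to0$; let $S_0=0$ and $S_{k+1}=\sum_{i=0}^k m_i$. Define $f_j:(S_j,S_{j+1}]\to\mathbb{R}$, $j\ge0$, recursively with $c_0=0$ and $c_j=f_{j-1}(S_j)$ for $j\ge1$, by $$f_j(x)=\begin{cases}-x+S_j+c_j & x\in(S_j,S_j+\tfrac{m_j}{16})\\ \tfrac{8}{m_j}(x-S_j-\tfrac{m_j}{8})^2-\tfrac{3m_j}{32}+c_j & x\in[S_j+\tfrac{m_j}{16},S_j+\tfrac{3m_j}{16})\\ -\tfrac{5m_j}{16}\exp\!\big(\tfrac{5m_j/16}{x-S_j-m_j/2}+1\big)+\tfrac{m_j}{4}+c_j & x\in[S_j+\tfrac{3m_j}{16},S_j+\tfrac{m_j}{2})\\ \tfrac{m_j}{4}+c_j & x=S_j+\tfrac{m_j}{2}\\ \tfrac{5m_j}{16}\exp\!\big(\tfrac{-5m_j/16}{x-S_j-m_j/2}+1\big)+\tfrac{m_j}{4}+c_j & x\in(S_j+\tfrac{m_j}{2},S_j+\tfrac{13m_j}{16})\\ -\tfrac{8}{m_j}(x-S_j-\tfrac{7m_j}{8})^2+\tfrac{19m_j}{32}+c_j & x\in[S_j+\tfrac{13m_j}{16},S_j+\tfrac{15m_j}{16})\\ -x+S_j+\tfrac{3m_j}{2}+c_j & x\in[S_j+\tfrac{15m_j}{16},S_{j+1}],\end{cases}$$ and define $F:\mathbb{R}\to\mathbb{R}$ by $F(x)=-x$ for $x\le0$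 and $F(x)=f_j(x)$ for $x\in(S_j,S_{j+1}]$. Let $x_0=0$ and $x_{k+1}=x_k-M_k\dot F(x_k)$ with $M_k=m_kI$ (here $p=1$) for $k\ge0$. Then $\{M_k\}$ consists of symmetric positive definite matrices with $\sum_k\lambda_{\min}(M_k)=\infty$ and $\lambda_{\max}(M_k)\to0$. Moreover, (a) $\lim_k x_k=\infty$, (b) $\lim_k F(x_k)=\infty$, and (c) $\lim_k|\dot F(x_k)|=1$.
   Context: $\dot F$ denotes the derivative of $F$; $\lambda_{\min},\lambda_{\max}$ denote smallest and largest eigenvalues. *)

From Stdlib Require Import Reals.
From Coquelicot Require Import Coquelicot.
Open Scope R_scope.

Definition Spart (m : nat -> R) (k : nat) : R :=
  match k with
  | O => 0
  | S k' => sum_f_R0 m k'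
  end.

(* The piece f_j on (S_j, S_{j+1}], with mj = m_j, s = S_j, c = c_j.
   (Only its values on (s, s + mj] matter.) *)
Definition fpiece (mj s c x : R) : R :=
  if Rlt_dec x (s + mj / 16) then - x + s + c
  else if Rlt_dec x (s + 3 * mj / 16) then
    8 / mj * (x - s - mj / 8) ^ 2 - 3 * mj / 32 + c
  else if Rlt_dec x (s + mj / 2) then
    - (5 * mj / 16) * exp ((5 * mj / 16) / (x - s - mj / 2) + 1) + mj / 4 + c
  else if Rle_dec x (s + mj / 2) then
    mj / 4 + c
  else if Rlt_dec x (s + 13 * mj / 16) then
    (5 * mj / 16) * exp ((- (5 * mj / 16)) / (x - s - mj / 2) + 1) + mj / 4 + c
  else if Rlt_dec x (s + 15 * mj / 16) then
    - (8 / mj) * (x - s - 7 * mj / 8) ^ 2 + 19 * mj / 32 + c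
  else - x + s + 3 * mj / 2 + c.

Fixpoint cseq (m : nat -> R) (j : nat) : R :=
  match j with
  | O => 0
  | S j' => fpiece (m j') (Spart m j') (cseq m j') (Spart m (S j'))
  end.

Definition fj (m : nat -> R) (j : nat) (x : R) : R :=
  fpiece (m j) (Spart m j) (cseq m j) x.

From Stdlib Require Import Reals Lra.
From Coquelicot Require Import Coquelicot.
Open Scope R_scope.

(* The iterates never leave the breakpoints: x_k = S_k.  Around each S_k the
   function F is the line of slope -1 through (S_k, c_k), so the gradient step
   of length m_k moves x_k to S_k + m_k = S_(k+1).  Since every piece f_j rises
   by m_j / 2 over (S_j, S_(j+1)], c_k = S_k / 2; hence x_k and F(x_k) go to
   infinity with S_k, while |F'(x_k)| = 1 throughout. *)

Ltac fpiece_cases :=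
  unfold fpiece; repeat match goal with
  | |- context [Rlt_dec ?a ?b] => destruct (Rlt_dec a b)
  | |- context [Rle_dec ?a ?b] => destruct (Rle_dec a b) end; lra.

Lemma Spart_S (m : nat -> R) (k : nat) : Spart m (S k) = Spart m k + m k.
Proof. destruct k; simpl; ring. Qed.

Lemma fpiece_left (mj s c y : R) :
  y < s + mj / 16 -> fpiece mj s c y = - y + s + c.
Proof. intros; fpiece_cases. Qed.

Lemma fpiece_right (mj s c y : R) :
  0 < mj -> s + 15 * mj / 16 <= y -> fpiece mj s c y = - y + s + 3 * mj / 2 + c.
Proof. intros; fpiece_cases. Qed.

Lemma is_derive_ext_interval (f g : R -> R) (a b p l : R) :
  a < p < b -> (forall y, a < y < b -> g y = f y) ->
  is_derive g p l -> is_derive f p l.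
Proof.
  intros Hp Hfg. apply is_derive_ext_loc.
  apply (locally_interval _ p a b); simpl; try lra.
  intros y Ha Hb; apply Hfg; lra.
Qed.

Section Breakpoints.

Variable m : nat -> R.
Hypothesis hpos : forall k, 0 < m k.

Lemma cseq_S (k : nat) : cseq m (S k) = cseq m k + m k / 2.
Proof.
  pose proof (hpos k).
  change (cseq m (S k)) with (fpiece (m k) (Spart m k) (cseq m k) (Spart m (S k))).
  rewrite Spart_S, fpiece_right by lra. lra.
Qed.

Lemma cseq_half (k : nat) : cseq m k = Spart m k / 2.
Proof.
  induction k as [|k IH]; [simpl; lra|].
  rewrite cseq_S, Spart_S, IH. lra.
Qed.

Variable F : R -> R.
Hypothesis hFneg : forall y, y <= 0 -> F y = - y.
Hypothesis hFpos : forall (j : nat) (y : R),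
  Spart m j < y <= Spart m (S j) -> F y = fj m j y.

(* Right of S_k this is the first branch of f_k; left of it, the last branch
   of f_(k-1), or F y = -y when k = 0. *)
Lemma F_affine_near_Spart (k : nat) :
  exists a, a < Spart m k /\
    forall y, a < y < Spart m k + m k / 16 -> F y = - y + Spart m k + cseq m k.
Proof.
  pose proof (hpos k).
  assert (Hright : forall y, Spart m k < y < Spart m k + m k / 16 ->
                   F y = - y + Spart m k + cseq m k).
  { intros y Hy. rewrite (hFpos k); [|rewrite Spart_S; lra].
    apply fpiece_left; lra. }
  destruct k as [|k].
  - exists (-1). simpl; split; [lra|]. intros y Hy.
    destruct (Rle_lt_dec y 0); [rewrite hFneg by lra; ring|].
    apply Hright; simpl; lra.
  - pose proof (hpos k). exists (Spart m (S k) - m k / 16). split; [lra|].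
    intros y Hy. destruct (Rle_lt_dec y (Spart m (S k))); [|apply Hright; lra].
    rewrite Spart_S in *. rewrite (hFpos k), cseq_S by (rewrite Spart_S; lra).
    unfold fj. rewrite fpiece_right; lra.
Qed.

Lemma is_derive_F_Spart (k : nat) : is_derive F (Spart m k) (-1).
Proof.
  destruct (F_affine_near_Spart k) as [a [Ha HF]]. pose proof (hpos k).
  apply (is_derive_ext_interval F (fun y => - y + Spart m k + cseq m k)
           a (Spart m k + m k / 16)).
  - lra.
  - intros y Hy; symmetry; apply HF; exact Hy.
  - auto_derive; [exact I | ring].
Qed.

Lemma F_Spart (k : nat) : F (Spart m k) = Spart m k / 2.
Proof.
  destruct (F_affine_near_Spart k) as [a [Ha HF]]. pose proof (hpos k).
  rewrite HF by lra. rewrite cseq_half. lra.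
Qed.

Lemma gradient_iterates_Spart (x : nat -> R) :
  x O = 0 -> (forall k, x (S k) = x k - m k * Derive F (x k)) ->
  forall k, x k = Spart m k.
Proof.
  intros hx0 hxS k. induction k as [|k IH]; [exact hx0|].
  rewrite hxS, IH, (is_derive_unique _ _ _ (is_derive_F_Spart k)), Spart_S.
  ring.
Qed.

End Breakpoints.

Theorem proposition5p4 (m : nat -> R) (F : R -> R) (x : nat -> R)
  (hpos : forall k, 0 < m k)
  (hdiv : is_lim_seq (fun k => sum_f_R0 m k) p_infty)
  (hm0 : is_lim_seq m 0)
  (hFneg : forall y, y <= 0 -> F y = - y)
  (hFpos : forall (j : nat) (y : R),
      Spart m j < y <= Spart m (S j) -> F y = fj m j y)
  (hx0 : x O = 0)
  (hxS : forall k, x (S k) = x k - m k * Derive F (x k)) :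
  (* M_k = m_k I (p = 1): symmetric positive definite,
     lambda_min(M_k) = lambda_max(M_k) = m_k *)
  ((forall k, 0 < m k) /\
   is_lim_seq (fun k => sum_f_R0 m k) p_infty /\
   is_lim_seq m 0) /\
  (* F is differentiable at every iterate, so dot F(x_k) is meaningful *)
  (forall k, ex_derive F (x k)) /\
  is_lim_seq x p_infty /\
  is_lim_seq (fun k => F (x k)) p_infty /\
  is_lim_seq (fun k => Rabs (Derive F (x k))) 1.
Proof.
  pose proof (gradient_iterates_Spart m hpos F hFneg hFpos x hx0 hxS) as Hx.
  assert (HS : is_lim_seq (Spart m) p_infty) by (apply is_lim_seq_incr_1; exact hdiv).
  pose proof (is_derive_F_Spart m hpos F hFneg hFpos) as HdF.
  split; [tauto|]. split.
  { intros k. rewrite Hx. exists (-1). apply HdF. }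
  split; [exact (is_lim_seq_ext _ _ _ (fun k => eq_sym (Hx k)) HS)|]. split.
  - apply (is_lim_seq_ext (fun k => Spart m k * / 2)).
    { intros k. rewrite Hx, (F_Spart m hpos F hFneg hFpos). reflexivity. }
    apply (is_lim_seq_mult _ _ p_infty (/ 2)); [exact HS | apply is_lim_seq_const |].
    apply is_Rbar_mult_p_infty_pos; simpl; lra.
  - apply (is_lim_seq_ext (fun _ => 1)); [|apply is_lim_seq_const].
    intros k. rewrite Hx, (is_derive_unique _ _ _ (HdF k)), Rabs_left; lra.
Qed.
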